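(* Let $X$ be a continuum, let $n\geq 2$ be an integer, and let $f:X\to X$ be a map. Then $F_n(f)$ is $\mathbb{Z}$-transitive if and only if $f$ is weakly mixing.
   Context: A continuum is a nonempty compact connected metric space. $F_n(X)$ is the set of nonempty subsets of $X$ with at most $n$ points, with the Hausdorff metric topology, and $F_n(f)(A)=f(A)$. A map $g:Z\to Z$ is $\mathbb{Z}$-transitive if for any nonempty open $U,V\subseteq Z$ there is $k\in\mathbb{Z}$ with $g^k(U)\cap V\neq\emptyset$, where for $k<0$, $g^k(U)$ means $(g^{-k})^{-1}(U)$. $f$ is weakly mixing if for any nonempty open $U_1,U_2,V_1,V_2\subseteq X$ there is $k\in\mathbb{N}$ with $f^k(U_1)\cap V_1\neq\emptyset$ and $f^k(U_2)\cap V_2\neq\emptyset$. *)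

From HB Require Import structures.
From mathcomp Require Import all_boot all_order all_algebra.
From mathcomp Require Import all_classical all_reals all_analysis.
Set Implicit Arguments. Unset Strict Implicit. Unset Printing Implicit Defensive.
Import Order.TTheory GRing.Theory Num.Theory.
Local Open Scope classical_set_scope.
Local Open Scope ring_scope.

Section Hyperspace.
Context {R : realType} {X : metricType R}.

Definition pt_set_dist (x : X) (B : set X) : R := inf [set mdist x b | b in B].
Definition hausdorff_dist (A B : set X) : R :=
  Num.max (sup [set pt_set_dist a B | a in A]) (sup [set pt_set_dist b A | b in B]).

Definition Fn (n : nat) : set (set X) :=
  [set A | A !=set0 /\ exists s : seq X, (size s <= n)%N /\ A = [set x | x \in s]].

Definition Fn_open (n : nat) (U : set (set X)) : Prop :=
  U `<=` Fn n /\
  forall A, U A -> exists2 e : R, 0 < e &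
    forall B, Fn n B -> hausdorff_dist A B < e -> U B.

Definition Fnf (f : X -> X) (A : set X) : set X := f @` A.

Definition Fn_iter_set (n : nat) (f : X -> X) (k : int) (U : set (set X))
  : set (set X) :=
  match k with
  | Posz m => [set iter m (Fnf f) A | A in U]
  | Negz m => [set A | Fn n A /\ U (iter m.+1 (Fnf f) A)] (* (g^(m+1))^-1 (U) *)
  end.

Definition Fn_Ztransitive (n : nat) (f : X -> X) : Prop :=
  forall U V : set (set X), Fn_open n U -> Fn_open n V ->
    U !=set0 -> V !=set0 ->
    exists k : int, Fn_iter_set n f k U `&` V !=set0.

Definition weakly_mixing (f : X -> X) : Prop :=
  forall U1 U2 V1 V2 : set X, open U1 -> open U2 -> open V1 -> open V2 ->
    U1 !=set0 -> U2 !=set0 -> V1 !=set0 -> V2 !=set0 ->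
    exists k : nat, (0 < k)%N /\
      (iter k f @` U1) `&` V1 !=set0 /\ (iter k f @` U2) `&` V2 !=set0.

End Hyperspace.

From HB Require Import structures.
From mathcomp Require Import all_boot all_order all_algebra.
From mathcomp Require Import all_classical all_reals all_analysis.
From mathcomp Require Import zify.
Set Implicit Arguments. Unset Strict Implicit. Unset Printing Implicit Defensive.
Import Order.TTheory GRing.Theory Num.Theory.
Local Open Scope classical_set_scope.
Local Open Scope ring_scope.

(* Write N(U, V) = {k | U meets f^-k(V)} ([hits f U V k]).
   Weak mixing gives a common element of N(U_i, V_i) for any finitely many
   pairs of nonempty open sets.  Given A, B in F_n(X), list them with the same
   number m <= n of indices and choose x_i near a_i with f^k(x_i) near b_i at
   such a common time k: then {x_i} is Hausdorff-close to A and its image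
   under F_n(f)^k is close to B, so F_n(f) is transitive even in forward time.
   Conversely, Z-transitivity between the open sets {A | A <= U} and
   {A | A meets U and V} of F_n(X), nonempty as n >= 2, gives a time m in
   N(U, U) and N(U, V), or a time m > 0 in N(U, U) and N(V, U).  In a
   nondegenerate continuum every nonempty open set contains two disjoint ones,
   so it returns to itself at a positive time.  This recurrence forces f to
   have dense range and to be transitive, and three transitivity times
   combined with the dichotomy once more give a positive common time in
   N(U1, V1) and N(U2, V2).  A one-point continuum is trivially weakly mixing. *)

Section hitting_times.
Context {T : Type} (f : T -> T).

Definition hits (U V : set T) (k : nat) : Prop := U `&` iter k f @^-1` V !=set0.

Lemma hits_imageP U V k : (iter k f @` U) `&` V !=set0 <-> hits U V k.
Proof.
split; first by move=> [_ [[x Ux <-] Vfx]]; exists x.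
by move=> [x [Ux Vfx]]; exists (iter k f x); split => //; exists x.
Qed.

Lemma hitsS U U' V V' k : U `<=` U' -> V `<=` V' -> hits U V k -> hits U' V' k.
Proof. by move=> UU' VV' [x [Ux Vfx]]; exists x; split; [exact: UU' | exact: VV']. Qed.

End hitting_times.

Section continuous_iterates.
Context {T : topologicalType} (f : T -> T).
Hypothesis f_cont : continuous f.

Lemma continuous_iter k : continuous (iter k f).
Proof.
elim: k => [|k IHk] x /=; first exact: cvg_id.
by rewrite iterfS; apply: continuous_comp; [exact: IHk | exact: f_cont].
Qed.

Lemma open_preimage_iter k V : open V -> open (iter k f @^-1` V).
Proof. by move=> V_open; apply: open_comp => // x _; exact: continuous_iter. Qed.

End continuous_iterates.

(* The trace of Z-transitivity of F_n(f) on the open sets {A | A <= U} and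
   {A | A meets U and V}: forward times give the first alternative, backward
   times the second. *)
Definition return_hit {T : topologicalType} (f : T -> T) : Prop :=
  forall U V : set T, open U -> open V -> U !=set0 -> V !=set0 ->
  exists m : nat, (hits f U U m /\ hits f U V m) \/
                  [/\ (0 < m)%N, hits f U U m & hits f V U m].

Section separation.
Context {T : topologicalType}.

Lemma open_disjoint_subsets (W : set T) x y : hausdorff_space T ->
  open W -> W x -> W y -> x != y ->
  exists U V : set T, [/\ open U /\ open V, U `<=` W /\ V `<=` W,
                          U x /\ V y & U `&` V = set0].
Proof.
rewrite open_hausdorff => T_hausdorff W_open Wx Wy /T_hausdorff[[A B] /=].
rewrite !inE => -[Ax By] [A_open B_open AB0].
exists (W `&` A), (W `&` B); split; [split; exact: openI | by split => z [] | by [] |].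
by rewrite setIACA AB0 setI0.
Qed.

Lemma connected_open_exists_neq (W : set T) x : accessible_space T ->
  connected [set: T] -> (exists a b : T, a <> b) -> open W -> W x ->
  exists2 y, W y & y != x.
Proof.
move=> T_T1 T_connected [a [b ab]] W_open Wx; apply: contrapT => W_x.
have W_set1 : W = [set x].
  apply/seteqP; split=> [y Wy|_ ->] //=.
  by apply: contrapT => /eqP yx; apply: W_x; exists y.
have x_clopen : [set x] = [set: T].
  apply: T_connected; first by exists x.
    by exists W; rewrite ?setTI.
  exists [set x]; rewrite ?setTI //.
  exact: accessible_closed_set1.
have ax : [set x] a by rewrite x_clopen.
have bx : [set x] b by rewrite x_clopen.
by apply: ab; rewrite ax bx.
Qed.

End separation.

(* Points of W are in U2, reach V2 at time D and V1 at time t; points of U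
   reach U1 at time t and W at time s + t.  A time in N(U, U) and N(U, V), or
   in N(U, U) and N(V, U), then shifts to a common time in N(U1, V1) and
   N(U2, V2). *)
Section common_hit_time.
Context {T : Type} (f : T -> T).
Variables (U1 U2 V1 V2 : set T) (D s t : nat).

Let W := U2 `&` iter D f @^-1` V2 `&` iter t f @^-1` V1.
Let U := iter t f @^-1` (U1 `&` iter s f @^-1` W).
Let V := iter D f @^-1` W.

Let iter_congr (P : set T) x i j : i = j -> P (iter i f x) -> P (iter j f x).
Proof. by move->. Qed.

Lemma common_hits_forward m : hits f U U m -> hits f U V m ->
  hits f U1 V1 (m + D) /\ hits f U2 V2 (m + D).
Proof.
rewrite /U /V /W => -[x [[_ [[U2x _] _]] [_ [[_ V2x] _]]]] [y [[U1y _] [_ V1y]]].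
split; [exists (iter t f y) | exists (iter s f (iter t f x))]; split => //=.
  by move: V1y => /=; rewrite -!iterD; apply: iter_congr; lia.
by move: V2x => /=; rewrite -!iterD; apply: iter_congr; lia.
Qed.

Lemma common_hits_backward m : hits f U U m -> hits f V U m ->
  hits f U1 V1 (m + s + t) /\ hits f U2 V2 (m + s + t).
Proof.
rewrite /U /V /W => -[x [[U1x _] [_ [_ V1x]]]] [y [[[U2y _] _] [_ [[_ V2y] _]]]].
split; [exists (iter t f x) | exists (iter D f y)]; split => //=.
  by move: V1x => /=; rewrite -!iterD; apply: iter_congr; lia.
by move: V2y => /=; rewrite -!iterD; apply: iter_congr; lia.
Qed.

End common_hit_time.

Section return_hit_dynamics.
Context {T : topologicalType} (f : T -> T).
Hypotheses (T_hausdorff : hausdorff_space T) (T_connected : connected [set: T])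
  (T_nondegenerate : exists a b : T, a <> b).
Hypotheses (f_cont : continuous f) (f_return_hit : return_hit f).

Let open_pre k (V : set T) : open V -> open (iter k f @^-1` V) :=
  @open_preimage_iter _ f f_cont k V.

Lemma return_hit_recurrent W : open W -> W !=set0 -> exists2 m, (0 < m)%N & hits f W W m.
Proof.
move=> W_open [x Wx].
have [y Wy yx] := connected_open_exists_neq (hausdorff_accessible T_hausdorff)
  T_connected T_nondegenerate W_open Wx.
have [U [V [[U_open V_open] [UW VW] [Uy Vx] UV0]]] :=
  open_disjoint_subsets T_hausdorff W_open Wy Wx yx.
have [[|m] [[UUm UVm]|[m_gt0 UUm _]]] :=
  f_return_hit U_open V_open (ex_intro _ y Uy) (ex_intro _ x Vx).
- by case: UVm => z UVz; have : (U `&` V) z by []; rewrite UV0.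
- by [].
- by exists m.+1 => //; exact: hitsS UUm.
- by exists m.+1 => //; exact: hitsS UUm.
Qed.

Lemma return_hit_dense_range W : open W -> W !=set0 -> exists x, W (f x).
Proof.
move=> W_open W0; have [m m_gt0 [x [_ Wfx]]] := return_hit_recurrent W_open W0.
by exists (iter m.-1 f x); rewrite -iterS prednK.
Qed.

Lemma return_hit_preimage_iter_neq0 k W : open W -> W !=set0 -> iter k f @^-1` W !=set0.
Proof.
elim: k W => [|k IHk] W W_open W0 //.
have [x Wfx] := return_hit_dense_range W_open W0.
have [y Wfy] := IHk (f @^-1` W) (open_pre 1 W_open) (ex_intro _ x Wfx).
by exists y.
Qed.

Lemma step_into_interiorC (O : set T) j y : O y -> (~` O)° (iter j.+1 f y) ->
  exists2 z, O z & (~` O)° (f z).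
Proof.
elim: j y => [|j IHj] y Oy Ky; first by exists y.
have [[z [Kz Oz]]|P_O0] := pselect (exists z, (~` O)° (iter j.+1 f z) /\ O z).
  exact: IHj Oz Kz.
exists y => //.
have P_open : open (iter j.+1 f @^-1` (~` O)°) :=
  open_pre j.+1 (@open_interior _ _).
have P_sub : iter j.+1 f @^-1` (~` O)° `<=` ~` O by move=> z Kz Oz; apply: P_O0; exists z.
apply: (interiorS P_sub); rewrite ((interior_id _).1 P_open).
by rewrite iterSr in Ky.
Qed.

Lemma return_hit_transitive A B : open A -> open B -> A !=set0 -> B !=set0 ->
  exists k, hits f A B k.
Proof.
move=> A_open B_open A0 B0; apply: contrapT => AB_never.
(* A lies in the interior K of the complement of O, which is forward invariant;
   a point of O entering K in one step yields the open set O `&` f^-1 K, whose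
   points never come back to O, contradicting recurrence. *)
pose O := \bigcup_k (iter k f @^-1` B).
have O_open : open O by apply: bigcup_open => k _; exact: open_pre.
have O_back k x : O (iter k f x) -> O x.
  by case=> j _ Bj; exists (j + k)%N => //; rewrite /preimage /= iterD.
have A_K : A `<=` (~` O)°.
  rewrite -((interior_id _).1 A_open); apply: interiorS => x Ax [k _ Bk].
  by apply: AB_never; exists k; exists x.
have [z Oz Kfz] : exists2 z, O z & (~` O)° (f z).
  have [m [[_ ABm]|[m_gt0 _ [y [By Aym]]]]] := f_return_hit A_open B_open A0 B0.
    by case: AB_never; exists m.
  rewrite -(prednK m_gt0) in Aym.
  by apply: step_into_interiorC (A_K _ Aym); exists 0%N.
have I_open : open (O `&` f @^-1` (~` O)°).
  exact: openI O_open (open_pre 1 (@open_interior _ _)).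
have [m m_gt0 [x [[_ Kfx] [Ofx _]]]] :=
  return_hit_recurrent I_open (ex_intro _ z (conj Oz Kfz)).
rewrite -(prednK m_gt0) iterSr in Ofx.
exact: interior_subset Kfx (O_back _ _ Ofx).
Qed.

Lemma return_hit_common_hits U1 U2 V1 V2 :
  open U1 -> open U2 -> open V1 -> open V2 ->
  U1 !=set0 -> U2 !=set0 -> V1 !=set0 -> V2 !=set0 ->
  exists k, [/\ (0 < k)%N, hits f U1 V1 k & hits f U2 V2 k].
Proof.
move=> U1_open U2_open V1_open V2_open U10 U20 V10 V20.
(* Hitting f^-1(V2), nonempty by dense range, gives a positive time D from U2
   into V2, so that m + D > 0 even if m = 0. *)
have [D0 U2V2] := return_hit_transitive U2_open (open_pre 1 V2_open)
  U20 (return_hit_preimage_iter_neq0 1 V2_open V20).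
pose D := D0.+1.
have U2'_open : open (U2 `&` iter D f @^-1` V2) := openI U2_open (open_pre D V2_open).
have [t W0] := return_hit_transitive U2'_open V1_open U2V2 V10.
pose W := U2 `&` iter D f @^-1` V2 `&` iter t f @^-1` V1.
have W_open : open W := openI U2'_open (open_pre t V1_open).
have [s U1'0] := return_hit_transitive U1_open W_open U10 W0.
have U1'_open : open (U1 `&` iter s f @^-1` W) := openI U1_open (open_pre s W_open).
have [m [[UUm UVm]|[m_gt0 UUm VUm]]] :=
  f_return_hit (open_pre t U1'_open) (open_pre D W_open)
    (return_hit_preimage_iter_neq0 t U1'_open U1'0)
    (return_hit_preimage_iter_neq0 D W_open W0).
- by exists (m + D)%N; have [] := common_hits_forward UUm UVm; rewrite addnS.
- by exists (m + s + t)%N; have [] := common_hits_backward UUm VUm; rewrite !addn_gt0 m_gt0.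
Qed.

End return_hit_dynamics.

Section mixing_of_all_orders.
Context {T : topologicalType} (f : T -> T).
Hypotheses (T0 : [set: T] !=set0) (f_cont : continuous f).
Hypothesis f_mixing2 : forall U1 U2 V1 V2 : set T,
  open U1 -> open U2 -> open V1 -> open V2 ->
  U1 !=set0 -> U2 !=set0 -> V1 !=set0 -> V2 !=set0 ->
  exists k, hits f U1 V1 k /\ hits f U2 V2 k.

Definition nonempty_open_pairs (m : nat) (Us Vs : nat -> set T) : Prop :=
  forall i, (i < m)%N -> [/\ open (Us i), open (Vs i), Us i !=set0 & Vs i !=set0].

Lemma hits_family_reduction m Us Vs : nonempty_open_pairs m Us Vs ->
  exists U V : set T, [/\ open U, open V, U !=set0, V !=set0 &
    forall k, hits f U V k -> forall i, (i < m)%N -> hits f (Us i) (Vs i) k].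
Proof.
elim: m => [|m IHm] UVs_open.
  by exists setT, setT; split => //; exact: openT.
have [|U [V [U_open V_open U0 V0 UV_hits]]] := IHm.
  by move=> i i_lt_m; apply: UVs_open; exact: ltnW.
have [Um_open Vm_open Um0 Vm0] := UVs_open m (ltnSn m).
have [k [[u [Uu Umu]] [v [Vv Vmv]]]] := f_mixing2 U_open V_open Um_open Vm_open U0 V0 Um0 Vm0.
exists (U `&` iter k f @^-1` Us m), (V `&` iter k f @^-1` Vs m); split.
- exact: openI U_open (open_preimage_iter f_cont k Um_open).
- exact: openI V_open (open_preimage_iter f_cont k Vm_open).
- by exists u.
- by exists v.
move=> j [x [[Ux Umx] [Vx Vmx]]] i; rewrite ltnS leq_eqVlt => /predU1P[->|i_lt_m].
  by exists (iter k f x); split => //=; rewrite -iterD addnC iterD.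
by apply: UV_hits i_lt_m; exists x.
Qed.

Lemma common_hits_family m Us Vs : nonempty_open_pairs m Us Vs ->
  exists k, forall i, (i < m)%N -> hits f (Us i) (Vs i) k.
Proof.
move=> /hits_family_reduction[U [V [U_open V_open U0 V0 UV_hits]]].
have [k [UVk _]] := f_mixing2 U_open U_open V_open V_open U0 U0 V0 V0.
by exists k; exact: UV_hits.
Qed.

End mixing_of_all_orders.

Section hausdorff_distance.
Context {R : realType} {X : metricType R}.
Implicit Types (A B : set X) (s : seq X).

Lemma has_ubound_image_seq (g : X -> R) s : has_ubound (g @` [set x | x \in s]).
Proof.
elim: s => [|a s [M ubM]]; first by exists 0 => y [x].
exists (Num.max (g a) M) => _ [x + <-] /= => /predU1P[->|xs].
  by rewrite le_max lexx.
by rewrite le_max (ubM (g x)) ?orbT //; exists x.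
Qed.

Lemma pt_set_dist_le x b B : B b -> pt_set_dist x B <= mdist x b.
Proof.
move=> Bb; apply: ge_inf; last by exists b.
by exists 0 => _ [y _ <-]; exact: mdist_ge0.
Qed.

Lemma pt_set_dist_lt x B e : B !=set0 -> pt_set_dist x B < e ->
  exists2 b, B b & mdist x b < e.
Proof.
move=> [b0 Bb0] /inf_lt[]; first by exists (mdist x b0), b0.
by move=> _ [b Bb <-]; exists b.
Qed.

Lemma hausdorff_distC A B : hausdorff_dist A B = hausdorff_dist B A.
Proof. by rewrite /hausdorff_dist maxC. Qed.

Lemma pt_set_dist_le_hausdorff n A B a : Fn n A -> A a ->
  pt_set_dist a B <= hausdorff_dist A B.
Proof.
move=> [_ [s [_ As]]] Aa; rewrite /hausdorff_dist le_max; apply/orP; left.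
apply: ub_le_sup; last by exists a.
by rewrite As; exact: has_ubound_image_seq.
Qed.

Lemma hausdorff_dist_lt n A B a e : Fn n A -> B !=set0 -> A a ->
  hausdorff_dist A B < e -> exists2 b, B b & mdist a b < e.
Proof.
move=> FnA B0 Aa AB_lt; apply: pt_set_dist_lt B0 _.
exact: le_lt_trans (pt_set_dist_le_hausdorff B FnA Aa) AB_lt.
Qed.

Lemma hausdorff_dist_le A B r : A !=set0 -> B !=set0 ->
  (forall a, A a -> exists2 b, B b & mdist a b <= r) ->
  (forall b, B b -> exists2 a, A a & mdist a b <= r) ->
  hausdorff_dist A B <= r.
Proof.
move=> [a0 Aa0] [b0 Bb0] AB BA; rewrite /hausdorff_dist ge_max; apply/andP; split.
  apply: ge_sup; first by exists (pt_set_dist a0 B), a0.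
  move=> _ [a Aa <-]; have [b Bb ab_le] := AB a Aa.
  exact: le_trans (pt_set_dist_le a Bb) ab_le.
apply: ge_sup; first by exists (pt_set_dist b0 A), b0.
move=> _ [b Bb <-]; have [a Aa ab_le] := BA b Bb.
by rewrite metric_sym in ab_le; exact: le_trans (pt_set_dist_le b Aa) ab_le.
Qed.

Lemma hausdorff_dist_image_le (I : Type) (J : set I) (a y : I -> X) r : J !=set0 ->
  (forall i, J i -> mdist (a i) (y i) <= r) -> hausdorff_dist (a @` J) (y @` J) <= r.
Proof.
move=> [i0 Ji0] ay_le; apply: hausdorff_dist_le; [by exists (a i0), i0 | by exists (y i0), i0 | |].
  by move=> _ [i Ji <-]; exists (y i); [exists i | exact: ay_le].
by move=> _ [i Ji <-]; exists (a i); [exists i | exact: ay_le].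
Qed.

Lemma seq_set_nth s x0 m : x0 \in s -> (size s <= m)%N ->
  [set x | x \in s] = nth x0 s @` `I_m.
Proof.
move=> x0s size_le_m; apply/seteqP; split=> [x xs | _ [i _ <-]] /=.
  by exists (index x s); [rewrite /= (leq_trans _ size_le_m) ?index_mem | exact: nth_index].
by case: (ltnP i (size s)) => [i_lt | i_ge]; [exact: mem_nth | rewrite nth_default].
Qed.

Lemma hausdorff_dist_nth_le s x0 m (y : nat -> X) r : x0 \in s -> (size s <= m)%N ->
  (forall i, (i < m)%N -> mdist (nth x0 s i) (y i) <= r) ->
  hausdorff_dist [set x | x \in s] (y @` `I_m) <= r.
Proof.
move=> x0s size_le_m sy_le; rewrite (seq_set_nth x0s size_le_m).
apply: hausdorff_dist_image_le sy_le; exists 0%N.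
by apply: leq_trans size_le_m; rewrite -has_predT; apply/hasP; exists x0.
Qed.

End hausdorff_distance.

Section hyperspace.
Context {R : realType} {X : metricType R}.
Implicit Types (A B : set X) (s : seq X).

Lemma open_mdist_radius (U : set X) x : open U -> U x ->
  exists2 r, 0 < r & forall y, mdist x y < r -> U y.
Proof.
move=> U_open Ux; have /nbhs_ballP[r /= r_gt0 ballU] : nbhs x U by exact: open_nbhs_nbhs.
by exists r => // y xy_lt; apply: ballU; rewrite ballEmdist.
Qed.

Lemma open_seq_radius (U : set X) s : open U -> (forall x, x \in s -> U x) ->
  exists2 r, 0 < r & forall x y, x \in s -> mdist x y < r -> U y.
Proof.
move=> U_open; elim: s => [|a s IHs] sU; first by exists 1.
have [r r_gt0 ra] := open_mdist_radius U_open (sU a (mem_head a s)).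
have [e e_gt0 es] := IHs (fun x xs => sU x (mem_behead (s := a :: s) xs)).
exists (Num.min r e) => [|x y]; first by rewrite lt_min r_gt0 e_gt0.
rewrite in_cons lt_min => /predU1P[->|xs] /andP[xy_lt_r xy_lt_e]; first exact: ra.
exact: es xs xy_lt_e.
Qed.

Lemma Fn_seq n s : (0 < size s <= n)%N -> Fn n [set x | x \in s].
Proof.
case: s => [//|a s] /= size_le_n; split; last by exists (a :: s).
by exists a; exact: mem_head.
Qed.

Lemma Fn_image n (g : nat -> X) m : (0 < m <= n)%N -> Fn n (g @` `I_m).
Proof.
move=> /andP[m_gt0 m_le_n].
have -> : g @` `I_m = [set x | x \in map g (iota 0 m)].
  apply/seteqP; split=> [_ [i i_lt <-] | x /mapP[i]] /=.
    by apply: map_f; rewrite mem_iota.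
  by rewrite mem_iota => i_lt ->; exists i.
by apply: Fn_seq; rewrite size_map size_iota m_gt0.
Qed.

Lemma Fn_openI n (UU VV : set (set X)) : Fn_open n UU -> Fn_open n VV -> Fn_open n (UU `&` VV).
Proof.
move=> [UU_Fn UU_open] [_ VV_open]; split=> [A [/UU_Fn] //|A [UUA VVA]].
have [e1 e1_gt0 e1_UU] := UU_open A UUA.
have [e2 e2_gt0 e2_VV] := VV_open A VVA.
exists (Num.min e1 e2) => [|B FnB]; first by rewrite lt_min e1_gt0 e2_gt0.
by rewrite lt_min => /andP[AB_lt1 AB_lt2]; split; [exact: e1_UU | exact: e2_VV].
Qed.

Lemma Fn_open_subsets n (U : set X) : open U -> Fn_open n [set A | Fn n A /\ A `<=` U].
Proof.
move=> U_open; split=> [A [] //|A [FnA AU]].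
have [A0 [s [_ As]]] := FnA.
have [e e_gt0 e_U] : exists2 e, 0 < e & forall a y, A a -> mdist a y < e -> U y.
  have sU x : x \in s -> U x by move=> xs; apply: AU; rewrite As.
  have [e e_gt0 e_U] := open_seq_radius U_open sU.
  by exists e => // a y; rewrite As; exact: e_U.
exists e => // B FnB AB_lt; split=> // b Bb.
rewrite hausdorff_distC in AB_lt.
have [a Aa ba_lt] := hausdorff_dist_lt FnB A0 Bb AB_lt.
by apply: e_U Aa _; rewrite metric_sym.
Qed.

Lemma Fn_open_meets n (U : set X) : open U -> Fn_open n [set A | Fn n A /\ A `&` U !=set0].
Proof.
move=> U_open; split=> [A [] //|A [FnA [a [Aa Ua]]]].
have [r r_gt0 r_U] := open_mdist_radius U_open Ua.
exists r => // B FnB AB_lt; split => //.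
have [b Bb ab_lt] := hausdorff_dist_lt FnA FnB.1 Aa AB_lt.
by exists b; split => //; exact: r_U.
Qed.

Lemma Fn_open_nth_approx n (UU : set (set X)) s x0 m : Fn_open n UU ->
  UU [set x | x \in s] -> x0 \in s -> (size s <= m <= n)%N ->
  exists2 r, 0 < r & forall y : nat -> X,
    (forall i, (i < m)%N -> mdist (nth x0 s i) (y i) < r) -> UU (y @` `I_m).
Proof.
move=> [_ UU_open] UUs x0s /andP[size_le_m m_le_n].
have [e e_gt0 e_UU] := UU_open _ UUs.
exists (e / 2) => [|y sy_lt]; first by rewrite divr_gt0.
have m_gt0 : (0 < m)%N.
  by apply: leq_trans size_le_m; rewrite -has_predT; apply/hasP; exists x0.
apply: e_UU; first by apply: Fn_image; rewrite m_gt0.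
have sy_le i : (i < m)%N -> mdist (nth x0 s i) (y i) <= e / 2 by move/sy_lt/ltW.
apply: le_lt_trans (hausdorff_dist_nth_le x0s size_le_m sy_le) _.
by rewrite ltr_pdivrMr // ltr_pMr // ltr1n.
Qed.

Lemma iter_Fnf (f : X -> X) k A : iter k (Fnf f) A = iter k f @` A.
Proof.
elim: k => [|k IHk] /=; first by rewrite image_id.
by rewrite IHk /Fnf image_comp.
Qed.

End hyperspace.

Section hyperspace_dynamics.
Context {R : realType} {X : metricType R} (f : X -> X).

Lemma weakly_mixingP : weakly_mixing f <->
  forall U1 U2 V1 V2 : set X, open U1 -> open U2 -> open V1 -> open V2 ->
    U1 !=set0 -> U2 !=set0 -> V1 !=set0 -> V2 !=set0 ->
    exists k, [/\ (0 < k)%N, hits f U1 V1 k & hits f U2 V2 k].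
Proof.
split=> f_mixing U1 U2 V1 V2 U1_open U2_open V1_open V2_open U10 U20 V10 V20.
  have [k [k_gt0 [/hits_imageP U1V1 /hits_imageP U2V2]]] :=
    f_mixing U1 U2 V1 V2 U1_open U2_open V1_open V2_open U10 U20 V10 V20.
  by exists k.
have [k [k_gt0 /hits_imageP U1V1 /hits_imageP U2V2]] :=
  f_mixing U1 U2 V1 V2 U1_open U2_open V1_open V2_open U10 U20 V10 V20.
by exists k.
Qed.

Lemma Fn_Ztransitive_return_hit n : (2 <= n)%N -> Fn_Ztransitive n f -> return_hit f.
Proof.
move=> n_ge2 f_Zt U V U_open V_open [u Uu] [v Vv].
have UU0 : [set A | Fn n A /\ A `<=` U] !=set0.
  exists [set x | x \in [:: u]]; split; first by apply: Fn_seq; exact: ltnW.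
  by move=> x /=; rewrite mem_seq1 => /eqP->.
have UV0 : ([set A | Fn n A /\ A `&` U !=set0] `&` [set A | Fn n A /\ A `&` V !=set0]) !=set0.
  have Fn_uv : Fn n [set x | x \in [:: u; v]] by exact: Fn_seq.
  exists [set x | x \in [:: u; v]]; split; split=> //.
    by exists u; split => //=; rewrite mem_head.
  by exists v; split => //=; rewrite !inE eqxx orbT.
have [[m|m] [A [UUA [[_ AU] [_ AV]]]]] := f_Zt _ _ (Fn_open_subsets n U_open)
  (Fn_openI (Fn_open_meets n U_open) (Fn_open_meets n V_open)) UU0 UV0.
- move: UUA AU AV => [A0 [_ A0U] <-]; rewrite iter_Fnf => /hits_imageP UA0 /hits_imageP VA0.
  by exists m; left; split; [exact: hitsS UA0 | exact: hitsS VA0].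
- move: UUA AU AV => [_ [_]]; rewrite iter_Fnf => AU [x [Ax Ux]] [y [Ay Vy]].
  exists m.+1; right; split => //; [exists x | exists y]; split => //; apply: AU.
    by exists x.
  by exists y.
Qed.

Lemma weakly_mixing_common_hits m Us Vs : [set: X] !=set0 -> continuous f ->
  weakly_mixing f -> nonempty_open_pairs m Us Vs ->
  exists k, forall i, (i < m)%N -> hits f (Us i) (Vs i) k.
Proof.
move=> X0 f_cont /weakly_mixingP f_mixing; apply: (common_hits_family X0 f_cont).
move=> U1 U2 V1 V2 U1_open U2_open V1_open V2_open U10 U20 V10 V20.
have [k [_ U1V1 U2V2]] :=
  f_mixing U1 U2 V1 V2 U1_open U2_open V1_open V2_open U10 U20 V10 V20.
by exists k.
Qed.

Lemma weakly_mixing_Fn_Ztransitive n : [set: X] !=set0 -> continuous f ->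
  weakly_mixing f -> Fn_Ztransitive n f.
Proof.
move=> X0 f_cont f_mixing UU VV UU_open VV_open [A UUA] [B VVB].
have [[a0 Aa0] [s [s_le_n As]]] := UU_open.1 A UUA.
have [[b0 Bb0] [t [t_le_n Bt]]] := VV_open.1 B VVB.
rewrite As in UUA Aa0; rewrite Bt in VVB Bb0.
(* [nth] pads s with a0 and t with b0, so indices i < m match points of A and B. *)
pose m := maxn (size s) (size t).
have m_le_n : (m <= n)%N by rewrite geq_max s_le_n t_le_n.
have s_le_m : (size s <= m <= n)%N by rewrite leq_maxl m_le_n.
have t_le_m : (size t <= m <= n)%N by rewrite leq_maxr m_le_n.
have [r1 r1_gt0 r1_UU] := Fn_open_nth_approx UU_open UUA Aa0 s_le_m.
have [r2 r2_gt0 r2_VV] := Fn_open_nth_approx VV_open VVB Bb0 t_le_m.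
pose Us i := (ball (nth a0 s i) r1)°.
pose Vs i := (ball (nth b0 t i) r2)°.
have [k UsVs] : exists k, forall i, (i < m)%N -> hits f (Us i) (Vs i) k.
  apply: weakly_mixing_common_hits X0 f_cont f_mixing _ => i _.
  by split; [exact: open_interior | exact: open_interior
            | exists (nth a0 s i) | exists (nth b0 t i)]; exact: nbhsx_ballx.
have /choice[x x_hits] : forall i, exists x, (i < m)%N -> Us i x /\ Vs i (iter k f x).
  by move=> i; case: (ltnP i m) => [/UsVs[x [Usx Vsx]]|_]; [exists x | exists a0].
have mdist_lt c r y : (ball c r)° y -> mdist c y < r.
  by move/interior_subset; rewrite ballEmdist.
exists (Posz k), (iter k f @` (x @` `I_m)); split.
  exists (x @` `I_m); last exact: iter_Fnf.
  by apply: r1_UU => i /x_hits[/mdist_lt].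
by rewrite image_comp; apply: r2_VV => i /x_hits[_ /mdist_lt].
Qed.

Lemma return_hit_weakly_mixing : connected [set: X] -> (exists a b : X, a <> b) ->
  continuous f -> return_hit f -> weakly_mixing f.
Proof.
move=> X_connected X_nondegenerate f_cont f_return_hit; apply/weakly_mixingP.
exact: return_hit_common_hits (@metric_hausdorff _ X) X_connected X_nondegenerate
  f_cont f_return_hit.
Qed.

Lemma subsingleton_weakly_mixing : (forall a b : X, a = b) -> weakly_mixing f.
Proof.
move=> X_subsingleton.
have hits1 (U V : set X) u v : U u -> V v -> hits f U V 1.
  by move=> Uu Vv; exists u; split => //=; rewrite (X_subsingleton (f u) v).
apply/weakly_mixingP => U1 U2 V1 V2 _ _ _ _ [u1 U1u1] [u2 U2u2] [v1 V1v1] [v2 V2v2].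
by exists 1%N; split; [| exact: hits1 U1u1 V1v1 | exact: hits1 U2u2 V2v2].
Qed.

End hyperspace_dynamics.

Theorem theorem5 (R : realType) (X : metricType R) (n : nat) (f : X -> X) :
  [set: X] !=set0 -> compact [set: X] -> connected [set: X] ->
  (2 <= n)%N -> continuous f ->
  (Fn_Ztransitive n f <-> weakly_mixing f).
Proof.
move=> X0 _ X_connected n_ge2 f_cont; split=> [f_Zt|]; last exact: weakly_mixing_Fn_Ztransitive.
have [X_nondegenerate|X_degenerate] := pselect (exists a b : X, a <> b).
  by apply: return_hit_weakly_mixing => //; exact: Fn_Ztransitive_return_hit f_Zt.
apply: subsingleton_weakly_mixing => a b; apply: contrapT => ab.
by apply: X_degenerate; exists a, b.
Qed.
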